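(* Let $\Delta\in\mathcal{H}_{\ge 3}$ be a hypergraph on $[d]$ and let $F$ be a finite set of atoms of the form $(c_1\not\sim c_2)$ with $c_1\ne c_2\in[d]$. Then there exists a unique hypergraph $\Delta_F$ on $[d]$ that is minimal (with respect to $\le$) among the hypergraphs $\widetilde\Delta$ satisfying: (1) $\Delta\le\widetilde\Delta$; (2) there is no atom $(c_1\not\sim c_2)$ in $F$ and no pair of distinct edges $e_1,e_2\in\widetilde\Delta$ with $\{c_1,c_2\}\subseteq e_1\cap e_2$.
   Context: A hypergraph on the vertex set $[d]$ is a collection $\Delta$ of subsets of $[d]$ (edges) such that no edge is a proper subset of another edge. For hypergraphs $\Delta_1,\Delta_2$, $\Delta_1\le\Delta_2$ means that every edge of $\Delta_1$ is contained in some edge of $\Delta_2$. $\mathcal{H}_{\ge3}$ is the set of hypergraphs all of whose edges have size at least $3$. *)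

From mathcomp Require Import all_boot.
Set Implicit Arguments. Unset Strict Implicit. Unset Printing Implicit Defensive.

Definition is_hypergraph (d : nat) (D : {set {set 'I_d}}) : Prop :=
  forall e f, e \in D -> f \in D -> ~~ (e \proper f).

Definition hle (d : nat) (D1 D2 : {set {set 'I_d}}) : Prop :=
  forall e, e \in D1 -> exists2 f, f \in D2 & e \subset f.

Definition H_ge3 (d : nat) (D : {set {set 'I_d}}) : Prop :=
  forall e, e \in D -> 3 <= #|e|.

(* An atom (c1 !~ c2) is represented by the pair (c1, c2), with c1 <> c2. *)
Definition valid_atoms (d : nat) (F : {set 'I_d * 'I_d}) : Prop :=
  forall c, c \in F -> c.1 != c.2.

Definition atoms_separated (d : nat) (F : {set 'I_d * 'I_d})
    (D : {set {set 'I_d}}) : Prop :=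
  forall c e1 e2, c \in F -> e1 \in D -> e2 \in D -> e1 != e2 ->
    ~~ ([set c.1; c.2] \subset e1 :&: e2).

Definition admissible (d : nat) (Delta : {set {set 'I_d}})
    (F : {set 'I_d * 'I_d}) (D : {set {set 'I_d}}) : Prop :=
  [/\ is_hypergraph D, hle Delta D & atoms_separated F D].

Definition minimal_admissible (d : nat) (Delta : {set {set 'I_d}})
    (F : {set 'I_d * 'I_d}) (D : {set {set 'I_d}}) : Prop :=
  admissible Delta F D /\
  (forall D', admissible Delta F D' -> hle D' D -> D' = D).

(* Merging two edges that contain a common forbidden pair is forced: any
   separated D above the current hypergraph must contain both edges in a
   single edge of D. Repeating such merges strictly decreases the number of
   edges, so it ends with a separated family B that lies below every
   admissible hypergraph. Its inclusion-maximal edges then form the least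
   admissible hypergraph, and a least element is the unique minimal one since
   <= is antisymmetric on hypergraphs. *)
From mathcomp Require Import all_boot.
Set Implicit Arguments. Unset Strict Implicit. Unset Printing Implicit Defensive.

Section Hypergraphs.

Variables (d : nat) (F : {set 'I_d * 'I_d}).
Implicit Types A B D : {set {set 'I_d}}.

Lemma hle_refl A : hle A A.
Proof. by move=> e eA; exists e. Qed.

Lemma hle_trans A B D : hle A B -> hle B D -> hle A D.
Proof.
move=> hAB hBD e /hAB [f /hBD [g gD fg] ef].
by exists g => //; apply: subset_trans ef fg.
Qed.

Lemma sub_hle A B : A \subset B -> hle A B.
Proof. by move=> /subsetP AB e eA; exists e; rewrite ?AB. Qed.

Lemma hypergraph_hle_sub A B :
  is_hypergraph A -> hle A B -> hle B A -> A \subset B.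
Proof.
move=> hA hAB hBA; apply/subsetP => e eA.
have [f fB ef] := hAB e eA; have [g gA fg] := hBA f fB.
have eg : e = g.
  apply/eqP; apply: contraNT (hA e g eA gA) => neg.
  by rewrite properEneq neg (subset_trans ef fg).
suff -> : e = f by [].
by apply/eqP; rewrite eqEsubset ef eg.
Qed.

Lemma hle_antisym A B :
  is_hypergraph A -> is_hypergraph B -> hle A B -> hle B A -> A = B.
Proof.
by move=> hA hB hAB hBA; apply/eqP; rewrite eqEsubset !hypergraph_hle_sub.
Qed.

Lemma atoms_separatedS A B : A \subset B -> atoms_separated F B -> atoms_separated F A.
Proof. by move=> /subsetP AB sepB c e1 e2 cF /AB e1B /AB e2B; apply: sepB. Qed.

Lemma atoms_separated_or_overlap A :
  atoms_separated F A \/ exists c e1 e2, [/\ c \in F, e1 \in A, e2 \in A, e1 != e2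
                                           & [set c.1; c.2] \subset e1 :&: e2].
Proof.
case: (boolP [exists c, exists e1, exists e2, [&& c \in F, e1 \in A, e2 \in A,
                e1 != e2 & [set c.1; c.2] \subset e1 :&: e2]]).
  move=> /existsP [c /existsP [e1 /existsP [e2 /and5P [cF e1A e2A ne sub]]]].
  by right; exists c, e1, e2.
move=> noverlap; left => c e1 e2 cF e1A e2A ne; apply/negP => sub.
move/negP: noverlap; apply; apply/existsP; exists c; apply/existsP; exists e1.
by apply/existsP; exists e2; rewrite cF e1A e2A ne sub.
Qed.

Definition merge_edges A e1 e2 := e1 :|: e2 |: (A :\ e1 :\ e2).

Lemma hle_merge_edges A e1 e2 : hle A (merge_edges A e1 e2).
Proof.
move=> e eA; case: (eqVneq e e1) => [->|ne1].
  by exists (e1 :|: e2); rewrite ?setU11 ?subsetUl.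
case: (eqVneq e e2) => [->|ne2].
  by exists (e1 :|: e2); rewrite ?setU11 ?subsetUr.
by exists e; rewrite // !inE ne1 ne2 eA orbT.
Qed.

Lemma card_merge_edges A e1 e2 :
  e1 \in A -> e2 \in A -> e1 != e2 -> #|merge_edges A e1 e2| < #|A|.
Proof.
move=> e1A e2A ne; have e2A' : e2 \in A :\ e1 by rewrite !inE eq_sym ne.
rewrite cardsU1 (cardsD1 e1 A) (cardsD1 e2 (A :\ e1)) e1A e2A' add1n ltnS.
by rewrite leq_add2r leq_b1.
Qed.

Lemma merge_edges_hle A D c e1 e2 :
  atoms_separated F D -> hle A D -> c \in F -> e1 \in A -> e2 \in A ->
  [set c.1; c.2] \subset e1 :&: e2 -> hle (merge_edges A e1 e2) D.
Proof.
move=> sepD hAD cF e1A e2A sub e; rewrite !inE => /orP [/eqP ->|/and3P [_ _ eA]];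
  last exact: hAD.
have [f1 f1D s1] := hAD e1 e1A; have [f2 f2D s2] := hAD e2 e2A.
case: (eqVneq f1 f2) => [eqf|nef].
  by exists f1; rewrite // subUset s1 eqf s2.
by move: (sepD c f1 f2 cF f1D f2D nef); rewrite (subset_trans sub (setISS s1 s2)).
Qed.

Lemma separated_closure A :
  exists2 B, hle A B & atoms_separated F B /\
    forall D, atoms_separated F D -> hle A D -> hle B D.
Proof.
have [n] := ubnP #|A|; elim: n A => // n IH A cardA.
have [sepA|[c [e1 [e2 [cF e1A e2A ne sub]]]]] := atoms_separated_or_overlap A.
  by exists A; [apply: hle_refl | split].
have [|B hMB [sepB leastB]] := IH (merge_edges A e1 e2).
  exact: leq_trans (card_merge_edges e1A e2A ne) cardA.
exists B; first exact: hle_trans (@hle_merge_edges A e1 e2) hMB.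
by split=> // D sepD hAD; apply: leastB (merge_edges_hle sepD hAD cF e1A e2A sub).
Qed.

Definition maximal_edges A := [set e in A | [forall f in A, ~~ (e \proper f)]].

Lemma maximal_edges_sub A : maximal_edges A \subset A.
Proof. by apply/subsetP => e; rewrite inE => /andP []. Qed.

Lemma hypergraph_maximal_edges A : is_hypergraph (maximal_edges A).
Proof.
move=> e f; rewrite inE => /andP [_ /forall_inP maxe] fM.
exact/maxe/(subsetP (maximal_edges_sub A)).
Qed.

Lemma hle_maximal_edges A : hle A (maximal_edges A).
Proof.
move=> e eA; pose P := [pred f | (f \in A) && (e \subset f)].
have Pe : P e by rewrite /P /= eA subxx.
have [g /andP [gA eg] gmax] := @arg_maxnP _ e P (fun f => #|f|) Pe.
exists g => //; rewrite inE gA; apply/forall_inP => f fA; apply/negP => gf.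
have := gmax f; rewrite /P /= fA (subset_trans eg (proper_sub gf)) => /(_ isT).
by rewrite leqNgt (proper_card gf).
Qed.

Lemma least_admissible_unique_minimal Delta L :
  admissible Delta F L -> (forall D, admissible Delta F D -> hle L D) ->
  forall D, minimal_admissible Delta F D <-> D = L.
Proof.
move=> admL least D; split=> [[admD minD]|->].
  exact/esym/(minD L admL (least D admD)).
split=> // D' admD' hD'L; apply: hle_antisym hD'L (least D' admD').
  by case: admD'.
by case: admL.
Qed.

End Hypergraphs.

Theorem mainTheorem3 (d : nat) (Delta : {set {set 'I_d}})
    (F : {set 'I_d * 'I_d}) :
  is_hypergraph Delta -> H_ge3 Delta -> valid_atoms F ->
  exists! DF : {set {set 'I_d}}, minimal_admissible Delta F DF.
Proof.
move=> _ _ _; have [B hDB [sepB leastB]] := separated_closure F Delta.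
pose L := maximal_edges B.
have admL : admissible Delta F L.
  split; first exact: hypergraph_maximal_edges.
    exact: hle_trans hDB (@hle_maximal_edges _ B).
  exact: atoms_separatedS (maximal_edges_sub B) sepB.
have leastL D : admissible Delta F D -> hle L D.
  case=> _ hDD sepD; apply: hle_trans (sub_hle (maximal_edges_sub B)) _.
  exact: leastB.
have minL := least_admissible_unique_minimal admL leastL.
by exists L; split=> [|D /minL ->]; first exact/minL.
Qed.
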